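(* Let $q$ be a prime power and let $m,\ell,r_1,\dots,r_m,k,N$ be positive integers with $\ell\le k\le m\ell$ and $N\ge m\ell$, and set $n:=\sum_{i=1}^m(\ell+r_i)$. Let $\widetilde G\in\mathbb{F}_{q^N}^{k\times m\ell}$ be a generator matrix of an $\mathbb{F}_{q^N}$-linear MRD code of length $m\ell$ and dimension $k$. For $i=1,\dots,m$ let $M_i\in\mathbb{F}_q^{\ell\times(\ell+r_i)}$ be a generator matrix of an $[\ell+r_i,\ell]$-MDS code over $\mathbb{F}_q$, and let $M\in\mathbb{F}_q^{m\ell\times n}$ be the block-diagonal matrix with diagonal blocks $M_1,\dots,M_m$ (all other entries zero). Then $\widetilde G M$ is a generator matrix of an $[n,k,\ell;r_1,\dots,r_m]$-PMDS code over $\mathbb{F}_{q^N}$, where the blocks are the consecutive column groups of sizes $\ell+r_1,\dots,\ell+r_m$.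
   Context: An $[n,k]$-MDS code over a field $\mathbb{F}$ is a linear code in $\mathbb{F}^n$ of dimension $k$ and minimum Hamming distance $n-k+1$. PMDS codes: let $\ell,m,r_1,\dots,r_m$ be positive integers, $n=\sum_{i=1}^m(r_i+\ell)$, and $C\subseteq\mathbb{F}^n$ a linear code of dimension $k<n$ with generator matrix $G=(B_1\mid\dots\mid B_m)$, $B_i\in\mathbb{F}^{k\times(r_i+\ell)}$. Then $C$ is an $[n,k,\ell;r_1,\dots,r_m]$-PMDS code if (i) for each $i$ the row space of $B_i$ is an $[r_i+\ell,\ell]$-MDS code, and (ii) for any choice of $r_i$ erased coordinates in the $i$-th block for every $i$, the code obtained from $C$ by puncturing these coordinates is an $[m\ell,k]$-MDS code. Rank metric: fixing an $\mathbb{F}_q$-basis of $\mathbb{F}_{q^N}$, each $u\in\mathbb{F}_{q^N}^{n'}$ is identified with a matrix in $\mathbb{F}_q^{N\times n'}$; the rank distance $d_R(u,v)$ is the rank of the matrix of $u-v$. An $\mathbb{F}_{q^N}$-linear rank-metric code of length $n'$ and dimension $k$ is a $k$-dimensional $\mathbb{F}_{q^N}$-subspace of $\mathbb{F}_{q^N}^{n'}$; it is MRD (maximum rank distance) if its minimum rank distance equals $n'-k+1$. *)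

From HB Require Import structures.
From mathcomp Require Import all_boot all_order all_algebra all_field.
Set Implicit Arguments. Unset Strict Implicit. Unset Printing Implicit Defensive.
Import Order.TTheory GRing.Theory Num.Theory.
Local Open Scope ring_scope.

Section Codes.
Variable K : fieldType.

Definition hweight n (u : 'rV[K]_n) : nat := #|[set j | u 0 j != 0]|.

(* The code C = row space of A (A : p x n, any number of rows) has minimum
   distance d w.r.t. the weight function w (distance d(u,v) = w (u - v)). *)
Definition has_min_dist p n (w : 'rV[K]_n -> nat) (A : 'M[K]_(p, n)) (d : nat) :=
  (exists2 c : 'rV[K]_n, (c <= A)%MS & c != 0 /\ w c = d) /\
  (forall c : 'rV[K]_n, (c <= A)%MS -> c != 0 -> (d <= w c)%N).

Definition MDS_code p n (A : 'M[K]_(p, n)) (k : nat) :=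
  \rank A = k /\ has_min_dist (@hweight n) A (n - k + 1).

End Codes.

Lemma sum_const_ord (m l : nat) : (\sum_(i < m) l)%N = (m * l)%N.
Proof. by rewrite big_const_ord iter_addn_0 mulnC. Qed.

(* PMDS codes. G : k x (\sum_i (l + r i)), blocks are consecutive column
   groups of sizes l + r 0, ..., l + r (m-1); submxrow G i is the block B_i. *)
Section PMDS.
Variable K : fieldType.

(* Puncturing: in block i keep the l coordinates in the image of the
   injective map f i (i.e. erase the other r i coordinates). *)
Definition punct_mx k m l (r : 'I_m -> nat)
    (G : 'M[K]_(k, \sum_(i < m) (l + r i)))
    (f : forall i : 'I_m, 'I_l -> 'I_(l + r i)) : 'M[K]_(k, m * l) :=
  castmx (erefl k, sum_const_ord m l)
    (\mxrow_(i < m) colsub (f i) (submxrow G i)).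

Definition is_PMDS k m l (r : 'I_m -> nat)
    (G : 'M[K]_(k, \sum_(i < m) (l + r i))) :=
  [/\ \rank G = k, (k < \sum_(i < m) (l + r i))%N,
      forall i : 'I_m, MDS_code (submxrow G i) l &
      forall f : forall i : 'I_m, 'I_l -> 'I_(l + r i),
        (forall i, injective (f i)) -> MDS_code (punct_mx G f) k].
End PMDS.

Definition diag_block (T : nzRingType) m (p q : 'I_m -> nat)
    (Ms : forall i, 'M[T]_(p i, q i)) (i j : 'I_m) : 'M[T]_(p i, q j) :=
  match i =P j with
  | ReflectT e => castmx (erefl (p i), f_equal q e) (Ms i)
  | ReflectF _ => 0
  end.

Definition blockdiag_mx (T : nzRingType) m l (r : 'I_m -> nat)
    (Ms : forall i, 'M[T]_(l, l + r i)) : 'M[T]_(m * l, \sum_(i < m) (l + r i)) :=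
  castmx (sum_const_ord m l, erefl _)
    (\mxblock_(i < m, j < m) @diag_block T m (fun=> l) (fun i => l + r i) Ms i j).

Definition rweight (F : fieldType) (L : fieldExtType F) n (u : 'rV[L]_n) : nat :=
  \rank (\matrix_(i < \dim (fullv : {vspace L}), j < n)
            coord (vbasis (fullv : {vspace L})) i (u 0 j)).

Definition MRD_gen (F : fieldType) (L : fieldExtType F) k n (G : 'M[L]_(k, n)) :=
  \rank G = k /\ has_min_dist (@rweight F L n) G (n - k + 1).

From mathcomp Require Import all_boot all_order all_algebra all_field.
From mathcomp Require Import zify.
Set Implicit Arguments. Unset Strict Implicit. Unset Printing Implicit Defensive.
Import GRing.Theory.
Local Open Scope ring_scope.

(* Puncturing [Gt M] in every block leaves [Gt] times the block-diagonal
   matrix of square [l x l] submatrices of the [M_i]; it is invertible over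
   [F] because any [l] columns of an MDS generator matrix are independent.
   Multiplication by an invertible [F]-matrix preserves rank weight, and the
   Hamming weight dominates the rank weight, so the punctured code inherits
   the minimum distance [m l - k + 1] of the MRD code.
   The [i]-th block is [G_i M_i], where [G_i] consists of [l <= k] columns of
   [Gt] and so has rank [l] ([Gt] is MDS for the Hamming metric too).  Its
   row space lies in that of [M_i], and the MDS property of [M_i], in the
   form "every [l] columns are independent", survives extending scalars
   from [F] to [L]. *)

Lemma ord_inj_in (T : finType) (S : {set T}) s : (s <= #|S|)%N ->
  exists2 g : 'I_s -> T, injective g & forall t, g t \in S.
Proof.
move=> le_s_S; exists (fun t => enum_val (widen_ord le_s_S t)).
  by move=> a b /enum_val_inj /(congr1 val) ab; apply/val_inj.
by move=> t; apply: (@enum_valP _ (mem S)).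
Qed.

Lemma col_mulmx (T : pzRingType) p n q (A : 'M[T]_(p, n)) (B : 'M_(n, q)) j :
  col j (A *m B) = A *m col j B.
Proof. by rewrite !colEsub mulmx_colsub. Qed.

Lemma mulmx_castmx (T : pzRingType) p a b s (e : a = b)
    (A : 'M[T]_(p, a)) (B : 'M_(a, s)) :
  castmx (erefl, e) A *m castmx (e, erefl) B = A *m B.
Proof. by case: b / e; rewrite !castmx_id. Qed.

Lemma castmx_mulmx (T : pzRingType) p s a b (e : a = b)
    (A : 'M[T]_(p, s)) (B : 'M_(s, a)) :
  castmx (erefl, e) (A *m B) = A *m castmx (erefl, e) B.
Proof. by case: b / e; rewrite !castmx_id. Qed.

Lemma row_free_castmx_col (K : fieldType) p a b (e : a = b) (B : 'M[K]_(p, a)) :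
  row_free (castmx (erefl, e) B) = row_free B.
Proof. by case: b / e; rewrite castmx_id. Qed.

Lemma Rank_inj n (p : 'I_n -> nat) i : injective (@tagnat.Rank n p i).
Proof. by move=> x y /tagnat.rank_inj; apply: eq_from_Tagged. Qed.

Lemma submxrow_castmx (T : Type) k m l (A : 'M[T]_(k, m * l)) j :
  submxrow (castmx (erefl, esym (sum_const_ord m l)) A) j =
  colsub (cast_ord (sum_const_ord m l) \o tagnat.Rank j) A.
Proof. by rewrite -colsub_cast colsub_comp. Qed.

Section HammingWeight.
Variable K : fieldType.

Definition col_supp p n (A : 'M[K]_(p, n)) : {set 'I_n} := [set j | col j A != 0].

Definition min_weight_ge p n (w : 'rV[K]_n -> nat) (A : 'M[K]_(p, n)) d :=
  forall c : 'rV_n, (c <= A)%MS -> c != 0 -> (d <= w c)%N.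

Definition colsub_free k n (A : 'M[K]_(k, n)) :=
  forall g : 'I_k -> 'I_n, injective g -> row_free (colsub g A).

Lemma mxrank_le_col_supp p n (A : 'M[K]_(p, n)) : (\rank A <= #|col_supp A|)%N.
Proof.
set S := col_supp A; rewrite -mxrank_tr.
have A_S : (A^T <= rowsub (fun t => @enum_val _ (mem S) t) A^T)%MS.
  apply/row_subP => j; have [Sj | ] := boolP (j \in S).
    by rewrite -(enum_rankK_in Sj Sj) -row_rowsub row_sub.
  by rewrite inE negbK => /eqP Aj0; rewrite -tr_col Aj0 trmx0 sub0mx.
exact: leq_trans (mxrankS A_S) (rank_leq_row _).
Qed.

Lemma submx_col_eq0 p n (Z : 'M[K]_(p, n)) (c : 'rV_n) j :
  (c <= Z)%MS -> col j Z = 0 -> c 0 j = 0.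
Proof.
move=> /submxP [w ->] Zj0.
by have := congr1 (fun u : 'cV_1 => u 0 0) (col_mulmx w Z j); rewrite Zj0 mulmx0 !mxE.
Qed.

(* The Singleton bound is attained inside the row space of [Z]: some nonzero
   word vanishes on [\rank Z - 1] columns of its column support. *)
Lemma exists_low_hweight p n (Z : 'M[K]_(p, n)) : (0 < \rank Z)%N ->
  exists2 c : 'rV_n, (c <= Z)%MS &
    c != 0 /\ (hweight c + \rank Z <= #|col_supp Z| + 1)%N.
Proof.
move=> rZ_gt0; set U := col_supp Z; set R := row_base Z.
have rZ_U : (\rank Z <= #|U|)%N := mxrank_le_col_supp Z.
have [g g_inj gU] :
    exists2 g : 'I_(\rank Z - 1) -> 'I_n, injective g & forall t, g t \in U.
  by apply: ord_inj_in; apply: leq_trans (leq_subr 1 _) rZ_U.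
have [v /sub_kermxP v_g v_nz] :
    exists2 v : 'rV_(\rank Z), (v <= kermx (colsub g R))%MS & v != 0.
  apply/rowV0Pn; rewrite kermx_eq0 /row_free.
  by have := rank_leq_col (colsub g R); case: eqP => // ->; lia.
have vR_Z : (v *m R <= Z)%MS by rewrite (submx_trans (submxMl _ _)) ?eq_row_base.
exists (v *m R) => //; split; first by rewrite mulmx_free_eq0 ?row_base_free.
have supp_vR : [set j | (v *m R) 0 j != 0] \subset U :\: (g @: 'I_(\rank Z - 1)).
  apply/subsetP => j; rewrite !inE => vRj; apply/andP; split.
    apply: contra vRj => /imsetP [t _ ->].
    by have := congr1 (fun u : 'rV_ _ => u 0 t) v_g; rewrite mulmx_colsub !mxE => ->.
  by apply: contra vRj => /eqP /(submx_col_eq0 vR_Z) ->.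
have := subset_leq_card supp_vR.
rewrite cardsD (setIidPr _); last by apply/subsetP => _ /imsetP [t _ ->].
rewrite card_imset // card_ord /hweight.
(* The same cardinals occur under different coercion paths; [lia] needs them
   as identical atoms. *)
by set u := #|U| in rZ_U *; set w := #|[set j | _]|; lia.
Qed.

Lemma mxrank_colsub_min_hweight k n (A : 'M[K]_(k, n)) s (g : 'I_s -> 'I_n) :
  row_free A -> min_weight_ge (@hweight K n) A (n - k + 1) ->
  injective g -> (s <= k)%N -> \rank (colsub g A) = s.
Proof.
move=> A_free A_wt g_inj le_s_k; set B := colsub g A.
apply/eqP; rewrite eqn_leq rank_leq_col /= leqNgt; apply/negP => rB_lt_s.
(* The codewords vanishing on the columns [g] form a subcode of dimension
   [k - \rank B > k - s] supported on [n - s] coordinates, so it contains a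
   word of weight below [n - k + 1]. *)
set Z := kermx B *m A.
have rZ : \rank Z = (k - \rank B)%N by rewrite mxrankMfree // mxrank_ker.
have [c c_Z [c_nz c_wt]] : exists2 c : 'rV_n, (c <= Z)%MS &
    c != 0 /\ (hweight c + \rank Z <= #|col_supp Z| + 1)%N.
  by apply: exists_low_hweight; rewrite rZ; lia.
have suppZ : col_supp Z \subset ~: (g @: 'I_s).
  apply/subsetP => j; rewrite !inE; apply: contraNN => /imsetP [t _ ->].
  by rewrite col_mulmx -col_colsub -col_mulmx mulmx_ker col0.
have := A_wt c (submx_trans c_Z (submxMl _ _)) c_nz.
have := subset_leq_card suppZ; have := cardsC (g @: 'I_s).
rewrite card_imset // !card_ord; set u := #|col_supp Z| in c_wt *.
set w := hweight c in c_wt *; set v := #|~: _|; lia.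
Qed.

Lemma min_hweight_colsub_free k n (A : 'M[K]_(k, n)) :
  row_free A -> colsub_free A -> min_weight_ge (@hweight K n) A (n - k + 1).
Proof.
move=> A_free A_cols _ /submxP [v ->] vA_nz; rewrite leqNgt; apply/negP => wt_lt.
set S := [set j | (v *m A) 0 j == 0].
have S_card : (k <= #|S|)%N.
  have := rank_leq_col A; move: A_free; rewrite /row_free => /eqP ->.
  have -> : S = ~: [set j | (v *m A) 0 j != 0] by apply/setP => j; rewrite !inE negbK.
  by rewrite cardsCs setCK card_ord; move: wt_lt; rewrite /hweight; set w := #|_|; lia.
have [g g_inj gS] := ord_inj_in S_card.
have : v *m colsub g A = 0.
  rewrite mulmx_colsub; apply/rowP => t; rewrite [LHS]mxE [RHS]mxE.
  by have := gS t; rewrite inE => /eqP.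
move/eqP; rewrite mulmx_free_eq0 ?A_cols // => /eqP v0.
by rewrite v0 mul0mx eqxx in vA_nz.
Qed.

Lemma MDS_code_min_hweight p n (A : 'M[K]_(p, n)) k : \rank A = k -> (0 < k)%N ->
  min_weight_ge (@hweight K n) A (n - k + 1) -> MDS_code A k.
Proof.
move=> rA k_gt0 A_wt; split=> //; split=> //.
have [c c_A [c_nz c_wt]] : exists2 c : 'rV_n, (c <= A)%MS &
    c != 0 /\ (hweight c + \rank A <= #|col_supp A| + 1)%N.
  by apply: exists_low_hweight; rewrite rA.
exists c => //; split=> //.
have := A_wt c c_A c_nz; have := max_card (mem (col_supp A)).
rewrite card_ord rA in c_wt *; set u := #|col_supp A| in c_wt *; lia.
Qed.

Lemma colsub_free_MDS_code k n (A : 'M[K]_(k, n)) : MDS_code A k -> colsub_free A.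
Proof.
move=> [rA [_ A_wt]] g g_inj; apply/eqP.
by apply: mxrank_colsub_min_hweight; rewrite ?/row_free ?rA.
Qed.

Lemma MDS_code_mulmx_colsub_free p k n (A : 'M[K]_(p, k)) (B : 'M[K]_(k, n)) :
  \rank A = k -> (0 < k)%N -> row_free B -> colsub_free B -> MDS_code (A *m B) k.
Proof.
move=> rA k_gt0 B_free B_cols; apply: MDS_code_min_hweight => //.
  by rewrite mxrankMfree.
move=> c c_AB.
exact: min_hweight_colsub_free B_free B_cols c (submx_trans c_AB (submxMl _ _)).
Qed.

End HammingWeight.

Section RankWeight.
Variables (F : fieldType) (L : fieldExtType F).

Lemma rweight_le_hweight n (u : 'rV[L]_n) : (rweight u <= hweight u)%N.
Proof.
apply: leq_trans (mxrank_le_col_supp _) (subset_leq_card _).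
apply/subsetP => j; rewrite !inE; apply: contraNN => /eqP u_j0.
by apply/eqP/matrixP => a b; rewrite !mxE u_j0 linear0.
Qed.

Lemma rweight_mulmx_row_free n n' (u : 'rV[L]_n) (D : 'M[F]_(n, n')) :
  row_free D -> rweight (u *m map_mx (in_alg L) D) = rweight u.
Proof.
move=> D_free; rewrite /rweight -(mxrankMfree _ D_free); congr (\rank _).
apply/matrixP => a j; rewrite !mxE linear_sum; apply: eq_bigr => t _.
by rewrite !mxE mulr_algr linearZ /= mulrC.
Qed.

Lemma MRD_gen_min_hweight k n (G : 'M[L]_(k, n)) :
  MRD_gen G -> min_weight_ge (@hweight L n) G (n - k + 1).
Proof.
move=> [_ [_ G_wt]] c c_G c_nz.
exact: leq_trans (G_wt c c_G c_nz) (rweight_le_hweight c).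
Qed.

Lemma MDS_code_MRD_gen_mulmx k n (G : 'M[L]_(k, n)) (D : 'M[F]_n) :
  MRD_gen G -> row_free D -> (0 < k)%N -> MDS_code (G *m map_mx (in_alg L) D) k.
Proof.
move=> [rG [_ G_wt]] D_free k_gt0; apply: MDS_code_min_hweight => //.
  by rewrite mxrankMfree ?row_free_map.
move=> _ /submxP [w ->] wGD_nz; rewrite mulmxA.
have wG_nz : w *m G != 0 by apply: contraNneq wGD_nz => wG0; rewrite mulmxA wG0 mul0mx.
apply: leq_trans (rweight_le_hweight _); rewrite rweight_mulmx_row_free //.
exact: G_wt _ (submxMl _ _) wG_nz.
Qed.

End RankWeight.

Section BlockDiagonal.
Variables (T : nzRingType) (m l : nat) (q : 'I_m -> nat).

Definition blockdiag (Bs : forall i, 'M[T]_(l, q i)) : 'M[T]_(m * l, \sum_i q i) :=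
  castmx (sum_const_ord m l, erefl)
    (\mxblock_(i < m, j < m) @diag_block T m (fun=> l) q Bs i j).

Lemma diag_block_eq (Bs : forall i, 'M[T]_(l, q i)) j :
  @diag_block T m (fun=> l) q Bs j j = Bs j.
Proof. by rewrite /diag_block; case: eqP => // e; rewrite castmx_id. Qed.

Lemma diag_block_neq (Bs : forall i, 'M[T]_(l, q i)) i j :
  i != j -> @diag_block T m (fun=> l) q Bs i j = 0.
Proof. by rewrite /diag_block; case: eqP. Qed.

Lemma eq_blockdiag (Bs Cs : forall i, 'M[T]_(l, q i)) :
  (forall i, Bs i = Cs i) -> blockdiag Bs = blockdiag Cs.
Proof.
move=> eq_BC; congr castmx; apply/matrixP => a b; rewrite !mxE /diag_block.
by case: eqP => // e; rewrite eq_BC.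
Qed.

Lemma mulmx_blockdiag k (A : 'M[T]_(k, m * l)) Bs :
  A *m blockdiag Bs =
  \mxrow_j (submxrow (castmx (erefl, esym (sum_const_ord m l)) A) j *m Bs j).
Proof.
set A' := castmx _ A; have -> : A = castmx (erefl k, sum_const_ord m l) A'.
  by rewrite castmxKV.
rewrite mulmx_castmx -[A' in LHS]submxrowK mul_mxrow_mxblock; apply: eq_mxrow => j.
rewrite (bigD1 j) //= diag_block_eq big1 ?addr0 // => i ij.
by rewrite diag_block_neq ?mulmx0.
Qed.

End BlockDiagonal.

Lemma map_blockdiag (T S : nzRingType) (f : {rmorphism T -> S})
    m l (q : 'I_m -> nat) (Bs : forall i, 'M[T]_(l, q i)) :
  map_mx f (blockdiag Bs) = blockdiag (fun i => map_mx f (Bs i)).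
Proof.
rewrite /blockdiag map_castmx; congr castmx; apply/matrixP => a b.
rewrite !mxE /diag_block; case: eqP => [e|_]; last by rewrite !mxE rmorph0.
by rewrite !castmxE /= mxE.
Qed.

Lemma row_free_blockdiag (K : fieldType) m l (q : 'I_m -> nat)
    (Bs : forall i, 'M[K]_(l, q i)) :
  (forall i, row_free (Bs i)) -> row_free (blockdiag Bs).
Proof.
move=> Bs_free; apply/inj_row_free => v; rewrite mulmx_blockdiag.
set v' := castmx _ v => vB0.
suff v'0 : v' = 0.
  by rewrite -[v](castmxKV erefl (sum_const_ord m l)) -/v' v'0 castmx_const.
apply/mxrowP => j; rewrite submxrow0; apply/eqP.
rewrite -(mulmx_free_eq0 _ (Bs_free j)).
by rewrite -(mxrowK (fun j => submxrow v' j *m Bs j)) vB0 submxrow0.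
Qed.

Lemma punct_mx_mulmx_blockdiag (K : fieldType) k m l (r : 'I_m -> nat)
    (A : 'M[K]_(k, m * l)) (Bs : forall i, 'M[K]_(l, l + r i))
    (f : forall i, 'I_l -> 'I_(l + r i)) :
  punct_mx (A *m blockdiag Bs) f =
  A *m castmx (erefl, sum_const_ord m l) (blockdiag (fun i => colsub (f i) (Bs i))).
Proof.
rewrite /punct_mx -castmx_mulmx !mulmx_blockdiag; congr castmx.
by apply: eq_mxrow => i; rewrite mxrowK mulmx_colsub.
Qed.



Theorem theorem13 (F : finFieldType) (L : fieldExtType F)
  (m l k N : nat) (r : 'I_m -> nat)
  (Hm : (0 < m)%N) (Hl : (0 < l)%N) (Hr : forall i, (0 < r i)%N)
  (Hk : (0 < k)%N) (HN : (0 < N)%N)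
  (HdimL : \dim (fullv : {vspace L}) = N)
  (Hlk : (l <= k)%N) (Hkml : (k <= m * l)%N) (HNml : (m * l <= N)%N)
  (Gt : 'M[L]_(k, m * l)) (HGt : MRD_gen Gt)
  (Ms : forall i : 'I_m, 'M[F]_(l, l + r i))
  (HMs : forall i, MDS_code (Ms i) l) :
  is_PMDS (Gt *m map_mx (in_alg L) (blockdiag_mx Ms)).
Proof.
have Gt_free : row_free Gt by rewrite /row_free HGt.1.
have Ms_free i : row_free (Ms i) by rewrite /row_free (HMs i).1.
have -> : blockdiag_mx Ms = blockdiag Ms by [].
split.
- by rewrite mxrankMfree ?row_free_map ?row_free_blockdiag ?HGt.1.
- have : (m <= \sum_i r i)%N by rewrite -[m in (m <= _)%N]card_ord -sum1_card leq_sum.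
  by rewrite big_split sum_const_ord /=; lia.
- move=> i; rewrite map_blockdiag mulmx_blockdiag mxrowK.
  apply: MDS_code_mulmx_colsub_free; rewrite ?row_free_map //.
    rewrite submxrow_castmx; apply: mxrank_colsub_min_hweight Hlk => //.
      exact: MRD_gen_min_hweight.
    exact: inj_comp (@cast_ord_inj _ _ _) (@Rank_inj _ _ _).
  by move=> g g_inj; rewrite -map_mxsub row_free_map; apply: colsub_free_MDS_code.
- move=> f f_inj; rewrite map_blockdiag punct_mx_mulmx_blockdiag.
  pose D := castmx (erefl, sum_const_ord m l)
    (blockdiag (fun i => colsub (f i) (Ms i))).
  have -> : castmx (erefl, sum_const_ord m l)
      (blockdiag (fun i => colsub (f i) (map_mx (in_alg L) (Ms i))))
    = map_mx (in_alg L) D.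
    rewrite map_castmx map_blockdiag; congr castmx.
    by apply: eq_blockdiag => i; rewrite map_mxsub.
  apply: MDS_code_MRD_gen_mulmx => //.
  rewrite row_free_castmx_col row_free_blockdiag // => i.
  exact: colsub_free_MDS_code.
Qed.
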